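(* Fix an integer horizon $T\ge 1$ and positive constants $s,k_u,m,\delta_1,\delta_2,\gamma,q,k_w,n,A,M_1$ with $0<m<1$, $0<n<1$, and constants $M_2\ge 0$, $0<N<1$. Consider the discrete-time controlled system (Model A) \[ \begin{aligned} u_{t+1}&=u_t\Big[s\Big(1-\tfrac{u_t}{k_u}\Big)\Big(\tfrac{u_t}{k_u}-m\Big)+1\Big](1-\delta_1 v_t)+h_t w_t\Big[q\Big(1-\tfrac{w_t}{k_w}\Big)\Big(\tfrac{w_t}{k_w}-n\Big)+1\Big],\\ v_{t+1}&=\Big(v_t+u_t\Big[s\Big(1-\tfrac{u_t}{k_u}\Big)\Big(\tfrac{u_t}{k_u}-m\Big)+1\Big]\delta_2 v_t\Big)(1-\gamma),\\ w_{t+1}&=(w_t-h_t w_t)\Big[q\Big(1-\tfrac{w_t}{k_w}\Big)\Big(\tfrac{w_t}{k_w}-n\Big)+1\Big], \end{aligned} \qquad t=0,1,\dots,T-1, \] with given initial values $u_0,v_0,w_0$, where the control ${\bf h}=(h_0,\dots,h_{T-1})$ ranges over the control set $\Omega=\{{\bf h}: 0\le h_t\le A,\ t=0,\dots,T-1\}$, and the objective functional to be maximized is \[ J({\bf h})=u_T+N w_T-\sum_{t=0}^{T-1}\big(M_1 h_t^2+M_2 h_t\big). \] Let ${\bf h}^\ast=(h^\ast_0,\dots,h^\ast_{T-1})\in\Omega$ be an optimal control with corresponding state solutions ${\bf u}^\ast=(u^\ast_0,\dots,u^\ast_T)$, ${\bf v}^\ast=(v^\ast_0,\dots,v^\ast_T)$,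 ${\bf w}^\ast=(w^\ast_0,\dots,w^\ast_T)$. Then there exist adjoint vectors $\lambda_{\bf u}=(\lambda_{u,0},\dots,\lambda_{u,T})$, $\lambda_{\bf v}=(\lambda_{v,0},\dots,\lambda_{v,T})$, $\lambda_{\bf w}=(\lambda_{w,0},\dots,\lambda_{w,T})$ satisfying, for $t=0,\dots,T-1$, \[ \begin{aligned} \lambda_{u,t}=&\Big((1-\delta_1 v^\ast_t)\lambda_{u,t+1}+\delta_2 v^\ast_t(1-\gamma)\lambda_{v,t+1}\Big)\Big[s\Big(1-\tfrac{u^\ast_t}{k_u}\Big)\Big(\tfrac{u^\ast_t}{k_u}-m\Big)+1\Big]\\ &+\Big(u^\ast_t(1-\delta_1 v^\ast_t)\lambda_{u,t+1}+u^\ast_t\delta_2 v^\ast_t(1-\gamma)\lambda_{v,t+1}\Big)\Big[\tfrac{s}{k_u}\Big(1-\tfrac{u^\ast_t}{k_u}\Big)-\tfrac{s}{k_u}\Big(\tfrac{u^\ast_t}{k_u}-m\Big)\Big],\\ \lambda_{v,t}=&-\lambda_{u,t+1}u^\ast_t\Big[s\Big(1-\tfrac{u^\ast_t}{k_u}\Big)\Big(\tfrac{u^\ast_t}{k_u}-m\Big)+1\Big]\delta_1\\ &+\lambda_{v,t+1}\Big[1+u^\ast_t\Big(s\Big(1-\tfrac{u^\ast_t}{k_u}\Big)\Big(\tfrac{u^\ast_t}{k_u}-m\Big)+1\Big)\delta_2\Big](1-\gamma),\\ \lambda_{w,t}=&\Big(h^\ast_t\lambda_{u,t+1}+(1-h^\ast_t)\lambda_{w,t+1}\Big)\Big[q\Big(1-\tfrac{w^\ast_t}{k_w}\Big)\Big(\tfrac{w^\ast_t}{k_w}-n\Big)+1\Big]\\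 &+w^\ast_t\Big(h^\ast_t\lambda_{u,t+1}+(1-h^\ast_t)\lambda_{w,t+1}\Big)\Big[\tfrac{q}{k_w}\Big(1-\tfrac{w^\ast_t}{k_w}\Big)-\tfrac{q}{k_w}\Big(\tfrac{w^\ast_t}{k_w}-n\Big)\Big], \end{aligned} \] with transversality conditions $\lambda_{u,T}=1$, $\lambda_{v,T}=0$, $\lambda_{w,T}=N$. Moreover, for $t=0,\dots,T-1$, \[ h^\ast_t=\min\left\{A,\ \max\left\{0,\ \frac{(\lambda_{u,t+1}-\lambda_{w,t+1})\Big[q\Big(1-\tfrac{w^\ast_t}{k_w}\Big)\Big(\tfrac{w^\ast_t}{k_w}-n\Big)+1\Big]w^\ast_t-M_2}{2M_1}\right\}\right\}. \]
   Context: Here $u_t$, $v_t$, $w_t$ denote the prey (target), predator and reserve population sizes at time step $t$; $h_t$ is the proportion of the reserve population translocated to the target population at step $t$. The parameters: $s$, $q$ are intrinsic growth rates of prey and reserve, $k_u$, $k_w$ their carrying capacities, $m,n\in(0,1)$ strong Allee constants, $\delta_1$ the consumption rate, $\delta_2$ the attack rate, $\gamma$ the predator decay rate, $A$ the maximum control effort, $M_1>0$, $M_2\ge 0$ cost constants and $N\in(0,1)$ the weight on the final reserve population. In the paper's setting the initial reserve population satisfies $w_0>nk_w$ and the initial prey population is below its growth threshold. *)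

From Stdlib Require Import Reals.
Open Scope R_scope.

Definition growth (s k m x : R) : R := s * (1 - x / k) * (x / k - m) + 1.

Fixpoint modelA (s ku m d1 d2 g q kw n u0 v0 w0 : R) (h : nat -> R) (t : nat)
  : R * R * R :=
  match t with
  | O => (u0, v0, w0)
  | S t' =>
      let '(u, v, w) := modelA s ku m d1 d2 g q kw n u0 v0 w0 h t' in
      (u * growth s ku m u * (1 - d1 * v) + h t' * w * growth q kw n w,
       (v + u * growth s ku m u * d2 * v) * (1 - g),
       (w - h t' * w) * growth q kw n w)
  end.

Definition uA s ku m d1 d2 g q kw n u0 v0 w0 h t :=
  fst (fst (modelA s ku m d1 d2 g q kw n u0 v0 w0 h t)).
Definition vA s ku m d1 d2 g q kw n u0 v0 w0 h t :=
  snd (fst (modelA s ku m d1 d2 g q kw n u0 v0 w0 h t)).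
Definition wA s ku m d1 d2 g q kw n u0 v0 w0 h t :=
  snd (modelA s ku m d1 d2 g q kw n u0 v0 w0 h t).

Fixpoint sum_lt (f : nat -> R) (T : nat) : R :=
  match T with O => 0 | S T' => sum_lt f T' + f T' end.

Definition in_Omega (A : R) (T : nat) (h : nat -> R) : Prop :=
  forall t, (t < T)%nat -> 0 <= h t <= A.

Definition J_A s ku m d1 d2 g q kw n u0 v0 w0 M1 M2 N T h : R :=
  uA s ku m d1 d2 g q kw n u0 v0 w0 h T + N * wA s ku m d1 d2 g q kw n u0 v0 w0 h T
  - sum_lt (fun t => M1 * (h t)^2 + M2 * h t) T.

From Stdlib Require Import Reals Lra Lia FunctionalExtensionality.
From Coquelicot Require Import Coquelicot.
Open Scope R_scope.

(* Perturb the single control value h_t.  The sensitivities xi_j of the states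
   with respect to h_t vanish up to time t and then follow the linearised
   dynamics, while the costates lambda_j are propagated backwards from
   (1, 0, N) by the transposed Jacobian.  Hence <lambda_j, xi_j> is constant
   for j > t: at j = t + 1 it is the translocation gain
   (lambda_u - lambda_w)_(t+1) G_q(w_t) w_t, and at j = T it is the derivative
   of u_T + N w_T.  So dJ/dh_t = gain - (2 M1 h_t + M2), and the one-sided
   first-order conditions at a maximiser over [0, A] make h_t the projection of
   (gain - M2) / (2 M1) onto [0, A]. *)

Definition growth' (s k m x : R) : R := s / k * (1 - x / k) - s / k * (x / k - m).

Lemma is_derive_max_right (f : R -> R) x b l :
  is_derive f x l -> x < b -> (forall y, x <= y <= b -> f y <= f x) -> l <= 0.
Proof.
  intros Hf Hxb Hmax. apply is_derive_Reals in Hf.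
  destruct (Rle_or_lt l 0) as [|Hl]; [assumption|].
  destruct (Hf l Hl) as [[del Hdel] Hlim]; simpl in Hlim.
  set (e := Rmin ((b - x) / 2) (del / 2)).
  assert (He : 0 < e) by (apply Rmin_glb_lt; lra).
  assert (Heb : e <= (b - x) / 2) by apply Rmin_l.
  assert (Hed : e <= del / 2) by apply Rmin_r.
  specialize (Hlim e (Rgt_not_eq _ _ He) ltac:(rewrite Rabs_pos_eq; lra)).
  apply Rabs_def2 in Hlim.
  assert ((f (x + e) - f x) / e <= 0).
  { apply Rmult_le_0_r; [| left; apply Rinv_0_lt_compat; lra].
    specialize (Hmax (x + e) ltac:(lra)). lra. }
  lra.
Qed.

Lemma is_derive_max_left (f : R -> R) a x l :
  is_derive f x l -> a < x -> (forall y, a <= y <= x -> f y <= f x) -> 0 <= l.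
Proof.
  intros Hf Hax Hmax.
  assert (Hopp : is_derive (fun y => f (- y)) (- x) (- l)).
  { replace (- l) with (scal (-1) l) by (unfold scal; simpl; unfold mult; simpl; ring).
    apply (is_derive_comp f Ropp); [now rewrite Ropp_involutive |].
    auto_derive; [easy | ring]. }
  enough (- l <= 0) by lra.
  apply (is_derive_max_right _ (- x) (- a) (- l) Hopp); [lra |].
  intros y Hy. rewrite Ropp_involutive. apply Hmax. lra.
Qed.

Lemma Rmin_Rmax_clamp a b x c :
  a <= x <= b -> (x < b -> c <= x) -> (a < x -> x <= c) -> x = Rmin b (Rmax a c).
Proof.
  intros [Hax Hxb] Hright Hleft.
  destruct (Rle_lt_or_eq_dec a x Hax) as [Hax' | Eax];
    destruct (Rle_lt_or_eq_dec x b Hxb) as [Hxb' | Exb].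
  - specialize (Hright Hxb'); specialize (Hleft Hax').
    rewrite Rmax_right, Rmin_right; lra.
  - specialize (Hleft Hax'). rewrite Rmax_right, Rmin_left; lra.
  - specialize (Hright Hxb'). rewrite Rmax_left, Rmin_right; lra.
  - rewrite Rmin_left; [lra |]. rewrite <- Exb, <- Eax. apply Rmax_l.
Qed.

Lemma argmax_box_projection (f : R -> R) a b x p k :
  0 < k -> a <= x <= b -> (forall y, a <= y <= b -> f y <= f x) ->
  is_derive f x (p - k * x) -> x = Rmin b (Rmax a (p / k)).
Proof.
  intros Hk Hx Hmax Hf.
  replace (p - k * x) with (k * (p / k - x)) in Hf by (field; lra).
  apply Rmin_Rmax_clamp; [exact Hx | intros Hxb | intros Hax].
  - enough (k * (p / k - x) <= 0) by nra.
    apply (is_derive_max_right f x b); [exact Hf | exact Hxb |].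
    intros y Hy; apply Hmax; lra.
  - enough (0 <= k * (p / k - x)) by nra.
    apply (is_derive_max_left f a x); [exact Hf | exact Hax |].
    intros y Hy; apply Hmax; lra.
Qed.

Lemma is_derive_sum_lt (f : R -> nat -> R) (f' : nat -> R) y T :
  (forall k, is_derive (fun e => f e k) y (f' k)) ->
  is_derive (fun e => sum_lt (f e) T) y (sum_lt f' T).
Proof.
  intros Hf. induction T as [| T IH]; simpl.
  - apply (is_derive_const (V := R_NormedModule)).
  - apply (is_derive_plus (fun e => sum_lt (f e) T) (fun e => f e T)); auto.
Qed.

Lemma sum_lt_indicator (c : R) t T :
  sum_lt (fun k => if Nat.eqb k t then c else 0) T = if Nat.ltb t T then c else 0.
Proof.
  induction T as [| T IH]; simpl; [reflexivity |]. rewrite IH.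
  destruct (Nat.ltb_spec t T), (Nat.ltb_spec t (S T)), (Nat.eqb_spec T t);
    try lia; ring.
Qed.

Definition dot (x y : R * R * R) : R :=
  fst (fst x) * fst (fst y) + snd (fst x) * snd (fst y) + snd x * snd y.

Definition is_derive_state (X : R -> R * R * R) (y : R) (dx : R * R * R) : Prop :=
  is_derive (fun e => fst (fst (X e))) y (fst (fst dx)) /\
  is_derive (fun e => snd (fst (X e))) y (snd (fst dx)) /\
  is_derive (fun e => snd (X e)) y (snd dx).

Lemma is_derive_state_ext (X Y : R -> R * R * R) y dx :
  (forall e, X e = Y e) -> is_derive_state X y dx -> is_derive_state Y y dx.
Proof.
  intros E [Hu [Hv Hw]].
  split; [| split]; eapply is_derive_ext; try eassumption; intros e; cbv beta; now rewrite E.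
Qed.

Definition update (h : nat -> R) t y : nat -> R :=
  fun j => if Nat.eqb j t then y else h j.

Lemma update_id h t : update h t (h t) = h.
Proof.
  apply functional_extensionality; intros j; unfold update.
  now destruct (Nat.eqb_spec j t) as [-> |].
Qed.

Lemma is_derive_update h t j y :
  is_derive (fun e => update h t e j) y (if Nat.eqb j t then 1 else 0).
Proof. unfold update; destruct (Nat.eqb j t); auto_derive; easy. Qed.

Section Model.

Variables s ku m d1 d2 g q kw n : R.

Definition step (h : R) (x : R * R * R) : R * R * R :=
  let u := fst (fst x) in let v := snd (fst x) in let w := snd x in
  (u * growth s ku m u * (1 - d1 * v) + h * w * growth q kw n w,
   (v + u * growth s ku m u * d2 * v) * (1 - g),
   (w - h * w) * growth q kw n w).

Lemma modelA_S u0 v0 w0 h j :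
  modelA s ku m d1 d2 g q kw n u0 v0 w0 h (S j)
  = step (h j) (modelA s ku m d1 d2 g q kw n u0 v0 w0 h j).
Proof. simpl. now destruct (modelA s ku m d1 d2 g q kw n u0 v0 w0 h j) as [[u v] w]. Qed.

Definition step_linear (h : R) (x : R * R * R) (dh : R) (dx : R * R * R) : R * R * R :=
  let u := fst (fst x) in let v := snd (fst x) in let w := snd x in
  let a := fst (fst dx) in let b := snd (fst dx) in let c := snd dx in
  let Gu := growth s ku m u in let Pu := Gu + u * growth' s ku m u in
  let Gw := growth q kw n w in let Pw := Gw + w * growth' q kw n w in
  (Pu * (1 - d1 * v) * a - u * Gu * d1 * b + h * Pw * c + dh * w * Gw,
   (b + Pu * d2 * v * a + u * Gu * d2 * b) * (1 - g),
   (1 - h) * Pw * c - dh * w * Gw).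

Definition step_adjoint (h : R) (x l : R * R * R) : R * R * R :=
  let u := fst (fst x) in let v := snd (fst x) in let w := snd x in
  let lu := fst (fst l) in let lv := snd (fst l) in let lw := snd l in
  let Gu := growth s ku m u in let Pu := Gu + u * growth' s ku m u in
  let Gw := growth q kw n w in let Pw := Gw + w * growth' q kw n w in
  (Pu * ((1 - d1 * v) * lu + d2 * v * (1 - g) * lv),
   - lu * u * Gu * d1 + lv * (1 + u * Gu * d2) * (1 - g),
   Pw * (h * lu + (1 - h) * lw)).

Lemma dot_step_linear h x dh dx l :
  dot l (step_linear h x dh dx)
  = dot (step_adjoint h x l) dx
    + dh * ((fst (fst l) - snd l) * growth q kw n (snd x) * snd x).
Proof. unfold dot, step_linear, step_adjoint; simpl; ring. Qed.

Lemma is_derive_step (a b c H : R -> R) y da db dc dh :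
  is_derive a y da -> is_derive b y db -> is_derive c y dc -> is_derive H y dh ->
  is_derive_state (fun e => step (H e) (a e, b e, c e)) y
    (step_linear (H y) (a y, b y, c y) dh (da, db, dc)).
Proof.
  intros Ha Hb Hc HH.
  unfold is_derive_state, step, step_linear, growth, growth', Rdiv; simpl.
  split; [| split]; auto_derive;
    try solve [repeat split; try (eexists; eassumption)];
    rewrite ?(is_derive_unique (fun e : R => a e) y da Ha),
      ?(is_derive_unique (fun e : R => b e) y db Hb),
      ?(is_derive_unique (fun e : R => c e) y dc Hc),
      ?(is_derive_unique (fun e : R => H e) y dh HH);
    ring.
Qed.

Fixpoint sensitivity (h : nat -> R) (x : nat -> R * R * R) (t j : nat) : R * R * R :=
  match j with
  | O => (0, 0, 0)
  | S j' => step_linear (h j') (x j') (if Nat.eqb j' t then 1 else 0) (sensitivity h x t j')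
  end.

(* [costate_rev k] is the costate at time T - k. *)
Fixpoint costate_rev (h : nat -> R) (x : nat -> R * R * R) (lT : R * R * R) (T k : nat)
  : R * R * R :=
  match k with
  | O => lT
  | S k' => step_adjoint (h (T - S k')%nat) (x (T - S k')%nat) (costate_rev h x lT T k')
  end.

Definition costate h x lT T j : R * R * R := costate_rev h x lT T (T - j).

Lemma costate_end h x lT T : costate h x lT T T = lT.
Proof. unfold costate; now rewrite Nat.sub_diag. Qed.

Lemma costate_step h x lT T j : (j < T)%nat ->
  costate h x lT T j = step_adjoint (h j) (x j) (costate h x lT T (S j)).
Proof.
  intros HjT; unfold costate.
  replace (T - j)%nat with (S (T - S j)) by lia; simpl.
  now replace (T - S (T - S j))%nat with j by lia.
Qed.

Definition translocation_gain h x lT T t : R :=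
  let l := costate h x lT T (S t) in
  (fst (fst l) - snd l) * growth q kw n (snd (x t)) * snd (x t).

Lemma dot_costate_sensitivity h x lT T t j : (j <= T)%nat ->
  dot (costate h x lT T j) (sensitivity h x t j)
  = if Nat.ltb t j then translocation_gain h x lT T t else 0.
Proof.
  induction j as [| j IH]; intros HjT.
  - unfold dot; simpl; ring.
  - simpl sensitivity. rewrite dot_step_linear, <- costate_step, IH by lia.
    unfold translocation_gain.
    destruct (Nat.ltb_spec t j), (Nat.ltb_spec t (S j)), (Nat.eqb_spec j t);
      subst; try lia; ring.
Qed.

Section Trajectory.

Variables u0 v0 w0 : R.

Local Notation traj := (modelA s ku m d1 d2 g q kw n u0 v0 w0).

Lemma is_derive_modelA_update h t j :
  is_derive_state (fun y => traj (update h t y) j) (h t) (sensitivity h (traj h) t j).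
Proof.
  induction j as [| j [Hu [Hv Hw]]].
  - split; [| split]; simpl; apply (is_derive_const (V := R_NormedModule)).
  - pose proof (is_derive_step _ _ _ _ _ _ _ _ _ Hu Hv Hw (is_derive_update h t j (h t)))
      as Hstep.
    cbv beta in Hstep; rewrite update_id, <- !surjective_pairing in Hstep.
    apply (is_derive_state_ext _ _ _ _ (fun y => eq_sym (modelA_S u0 v0 w0 _ j))).
    eapply is_derive_state_ext; [| exact Hstep].
    intros y; cbv beta; now rewrite <- !surjective_pairing.
Qed.

Lemma is_derive_J_A_update M1 M2 N T h t : (t < T)%nat ->
  is_derive (fun y => J_A s ku m d1 d2 g q kw n u0 v0 w0 M1 M2 N T (update h t y)) (h t)
    (translocation_gain h (traj h) (1, 0, N) T t - (2 * M1 * h t + M2)).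
Proof.
  intros HtT.
  destruct (is_derive_modelA_update h t T) as [HuT [_ HwT]].
  assert (Hcost : is_derive
            (fun y => sum_lt (fun k => M1 * update h t y k ^ 2 + M2 * update h t y k) T)
            (h t) (sum_lt (fun k => if Nat.eqb k t then 2 * M1 * h t + M2 else 0) T)).
  { apply (is_derive_sum_lt (fun y k => M1 * update h t y k ^ 2 + M2 * update h t y k)).
    intros k; unfold update; destruct (Nat.eqb k t); auto_derive; trivial; ring. }
  rewrite sum_lt_indicator, (proj2 (Nat.ltb_lt t T) HtT) in Hcost.
  assert (Hgain : translocation_gain h (traj h) (1, 0, N) T t
                  = fst (fst (sensitivity h (traj h) t T)) + N * snd (sensitivity h (traj h) t T)).
  { pose proof (dot_costate_sensitivity h (traj h) (1, 0, N) T t T (le_n T)) as E.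
    rewrite costate_end, (proj2 (Nat.ltb_lt t T) HtT) in E.
    rewrite <- E; unfold dot; simpl; ring. }
  rewrite Hgain; unfold J_A, uA, wA.
  apply (is_derive_minus
           (fun y => fst (fst (traj (update h t y) T)) + N * snd (traj (update h t y) T)));
    [| exact Hcost].
  apply (is_derive_plus (fun y => fst (fst (traj (update h t y) T)))
                        (fun y => N * snd (traj (update h t y) T))); [exact HuT |].
  now apply (is_derive_scal (fun y => snd (traj (update h t y) T))).
Qed.

End Trajectory.

End Model.

Theorem theorem1 (T : nat) (s ku m d1 d2 g q kw n A M1 M2 N u0 v0 w0 : R)
  (hstar : nat -> R) :
  (1 <= T)%nat ->
  0 < s -> 0 < ku -> 0 < m -> m < 1 -> 0 < d1 -> 0 < d2 -> 0 < g ->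
  0 < q -> 0 < kw -> 0 < n -> n < 1 -> 0 < A -> 0 < M1 -> 0 <= M2 ->
  0 < N -> N < 1 ->
  in_Omega A T hstar ->
  (forall h, in_Omega A T h ->
     J_A s ku m d1 d2 g q kw n u0 v0 w0 M1 M2 N T h <=
     J_A s ku m d1 d2 g q kw n u0 v0 w0 M1 M2 N T hstar) ->
  let u := uA s ku m d1 d2 g q kw n u0 v0 w0 hstar in
  let v := vA s ku m d1 d2 g q kw n u0 v0 w0 hstar in
  let w := wA s ku m d1 d2 g q kw n u0 v0 w0 hstar in
  exists lu lv lw : nat -> R,
    (forall t, (t < T)%nat ->
       lu t = ((1 - d1 * v t) * lu (S t) + d2 * v t * (1 - g) * lv (S t))
                * (s * (1 - u t / ku) * (u t / ku - m) + 1)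
            + (u t * (1 - d1 * v t) * lu (S t) + u t * d2 * v t * (1 - g) * lv (S t))
                * (s / ku * (1 - u t / ku) - s / ku * (u t / ku - m))
       /\
       lv t = - lu (S t) * u t * (s * (1 - u t / ku) * (u t / ku - m) + 1) * d1
            + lv (S t) * (1 + u t * (s * (1 - u t / ku) * (u t / ku - m) + 1) * d2)
                * (1 - g)
       /\
       lw t = (hstar t * lu (S t) + (1 - hstar t) * lw (S t))
                * (q * (1 - w t / kw) * (w t / kw - n) + 1)
            + w t * (hstar t * lu (S t) + (1 - hstar t) * lw (S t))
                * (q / kw * (1 - w t / kw) - q / kw * (w t / kw - n))) /\
    lu T = 1 /\ lv T = 0 /\ lw T = N /\
    (forall t, (t < T)%nat ->
       hstar t = Rmin A (Rmax 0
         (((lu (S t) - lw (S t)) * (q * (1 - w t / kw) * (w t / kw - n) + 1) * w t - M2)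
          / (2 * M1)))).
Proof.
  intros _ _ _ _ _ _ _ _ _ _ _ _ _ HM1 _ _ _ Hadm Hopt u v w.
  subst u v w; unfold uA, vA, wA.
  set (x := modelA s ku m d1 d2 g q kw n u0 v0 w0 hstar).
  set (l := costate s ku m d1 d2 g q kw n hstar x (1, 0, N) T).
  exists (fun j => fst (fst (l j))), (fun j => snd (fst (l j))), (fun j => snd (l j)).
  split; [| split; [| split; [| split]]]; try (unfold l; now rewrite costate_end).
  - intros t Ht; unfold l; rewrite costate_step by exact Ht.
    unfold step_adjoint, growth, growth'; simpl; split; [| split]; ring.
  - intros t Ht.
    apply (argmax_box_projection
             (fun y => J_A s ku m d1 d2 g q kw n u0 v0 w0 M1 M2 N T (update hstar t y))
             0 A _ _ (2 * M1)); [lra | exact (Hadm t Ht) | |].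
    + intros y Hy; rewrite update_id; apply Hopt.
      intros k Hk; unfold update; destruct (Nat.eqb k t); auto.
    + match goal with |- is_derive _ _ ?slope => replace slope with
        (translocation_gain s ku m d1 d2 g q kw n hstar x (1, 0, N) T t
         - (2 * M1 * hstar t + M2)) end.
      * exact (is_derive_J_A_update s ku m d1 d2 g q kw n u0 v0 w0 M1 M2 N T hstar t Ht).
      * unfold translocation_gain, l, growth; simpl; ring.
Qed.
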